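(* Let $G=(S,T,\pi)$ be a countable two-person win-lose game such that the family $\mathcal{B}^1_{\downarrow}(G)$ is ascending-union closed. Then for every $\mathbf{q}\in\Delta(T)$ the supremum $\sup_{\mathbf{p}\in\Delta(S)}\pi^{\mathrm{mix}}(\mathbf{p},\mathbf{q})$ is attained, the supremum $\sup_{\mathbf{p}\in\Delta(S)}\inf_{\mathbf{q}\in\Delta(T)}\pi^{\mathrm{mix}}(\mathbf{p},\mathbf{q})$ is attained, and $$\max_{\mathbf{p}\in\Delta(S)}\inf_{\mathbf{q}\in\Delta(T)}\pi^{\mathrm{mix}}(\mathbf{p},\mathbf{q})=\inf_{\mathbf{q}\in\Delta(T)}\max_{\mathbf{p}\in\Delta(S)}\pi^{\mathrm{mix}}(\mathbf{p},\mathbf{q}).$$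
   Context: A two-person win-lose game is a triple $G=(S,T,\pi)$ where $S,T$ are non-empty sets (possibly infinite) and $\pi:S\times T\to\{0,1\}$. It is countable if $|S|=|T|=\aleph_0$. For a set $X$, $\Delta(X)$ denotes the set of probability distributions $\mathbf{p}=(p_x)_{x\in X}$ on $X$ with at most countable support ($p_x\ge 0$, $\sum_x p_x=1$). For $\mathbf{p}\in\Delta(S)$, $\mathbf{q}\in\Delta(T)$, $\pi^{\mathrm{mix}}(\mathbf{p},\mathbf{q})=\sum_{s,t}p_sq_t\pi(s,t)$. For $s\in S$ let $B_s=\{t\in T:\pi(s,t)=1\}$, let $\mathcal{B}^1(G)=\{B_s:s\in S\}$, and let $\mathcal{B}^1_{\downarrow}(G)=\{A\subseteq T:\exists s\in S,\ A\subseteq B_s\}$. A family $\mathcal{F}$ of sets is ascending-union closed if whenever $A_i\in\mathcal{F}$ for $i=1,2,\ldots$ and $A_1\subset A_2\subset\cdots$, then $\bigcup_{i=1}^\infty A_i\in\mathcal{F}$. *)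

From HB Require Import structures.
From mathcomp Require Import all_boot all_order all_algebra.
From mathcomp Require Import all_classical all_reals.
From mathcomp Require Import ereal esum.
Set Implicit Arguments. Unset Strict Implicit. Unset Printing Implicit Defensive.
Import Order.TTheory GRing.Theory Num.Theory.
Local Open Scope classical_set_scope.
Local Open Scope ring_scope.

Definition countably_infinite (X : Type) : Prop :=
  exists f : nat -> X, bijective f.

(* Delta(X): probability distributions on X (nonnegative weights summing to 1;
   a finite esum of nonnegative terms forces countable support). *)
Definition distr (R : realType) (X : choiceType) : set (X -> R) :=
  [set p | (forall x, 0 <= p x) /\ (\esum_(x in [set: X]) (p x)%:E = 1)%E].

Definition pimix (R : realType) (S T : choiceType) (pi : S -> T -> bool)
  (p : S -> R) (q : T -> R) : \bar R :=
  (\esum_(st in [set: S * T]) (p st.1 * q st.2 * (pi st.1 st.2)%:R)%:E)%E.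

Definition Bset (S T : Type) (pi : S -> T -> bool) (s : S) : set T :=
  [set t | pi s t].

Definition B1down (S T : Type) (pi : S -> T -> bool) : set (set T) :=
  [set A | exists s, A `<=` Bset pi s].

Definition ascending_union_closed (X : Type) (F : set (set X)) : Prop :=
  forall A : nat -> set X, (forall i, F (A i)) ->
    (forall i, A i `<=` A i.+1) -> F (\bigcup_i A i).
Arguments distr : clear implicits.

From HB Require Import structures.
From mathcomp Require Import all_boot all_order all_algebra.
From mathcomp Require Import all_classical all_reals.
From mathcomp Require Import ereal esum topology cantor normedtype sequences.
From mathcomp Require Import ring lra.
Set Implicit Arguments. Unset Strict Implicit. Unset Printing Implicit Defensive.
Import Order.TTheory GRing.Theory Num.Theory numFieldNormedType.Exports.
Local Open Scope classical_set_scope.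
Local Open Scope ring_scope.

(* Against a fixed mixed strategy q a row s is only as good as its winning set B_s, and
   ascending-union closure makes the family of winning sets compact: by compactness of the
   Cantor space a sequence of rows has a limit row dominating, on every finite set of
   columns, infinitely many of its terms.  Hence best responses exist and can be taken pure.

   For the minimax equality let v = inf_q max_p pimix p q, so every q has a pure reply of
   value >= v.  Restricted to finitely many columns, Blackwell approachability against
   these replies (the squared positive deficits grow at most linearly) yields an empirical
   distribution on finitely many rows covering each of these columns with probability
   almost v.  An ultrafilter limit of these distributions is a finitely additive
   probability lam on rows with lam(B^t) >= v for every column t.  It is made countably
   additive by giving row f_k the mass that lam puts, in the limit over longer and longer
   initial segments of columns, on rows first dominated there by f_k; compactness again
   prevents mass from escaping, so these weights sum to 1 and still cover each column
   with probability >= v. *)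

Lemma cantor_cluster (P : nat -> nat -> bool) : exists b : nat -> bool,
  forall m N, exists2 n, (N <= n)%N & forall i, (i < m)%N -> P n i = b i.
Proof.
have [b [_ clb]] := @cantor_space_compact ((P : nat -> cantor_space) @ \oo) _ filterT.
exists b => m N.
have nbhs_b : nbhs b (fun c : cantor_space => forall i : 'I_m, c (val i) = b (val i)).
  apply: (@filter_forall _ 'I_m (fun i (c : cantor_space) => c (val i) = b (val i))
    (nbhs b) _) => i.
  by apply: (@proj_continuous nat (fun=> bool) i b [set b i]); apply/principal_filterP.
have tail_N : ((P : nat -> cantor_space) @ \oo) (P @` [set n | N <= n]%N).
  by apply: filterS (nbhs_infty_ge N) => n Nn; exists n.
have [_ [[n /= Nn <-] Pb]] := clb _ _ tail_N nbhs_b.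
by exists n => // i im; exact: (Pb (Ordinal im)).
Qed.

Lemma exists_dominating_cluster (S T : Type) (pi : S -> T -> bool) (e : nat -> T)
    (hF : ascending_union_closed (B1down pi)) (s_ : nat -> S) :
  exists s0, forall m N, exists2 n, (N <= n)%N &
    forall i, (i < m)%N -> pi (s_ n) (e i) -> pi s0 (e i).
Proof.
have [b Hb] := cantor_cluster (fun n i => pi (s_ n) (e i)).
pose A m := [set e i | i in [set i | (i < m)%N /\ b i]].
have [s0 As0] : B1down pi (\bigcup_m A m).
  apply: hF => [m|m _ [i [im bi] <-]]; last by exists i => //; split => //; exact: ltnW.
  have [n _ Hn] := Hb m 0%N; exists (s_ n) => _ [i [im bi] <-].
  by rewrite /Bset /= Hn.
exists s0 => m N; have [n Nn Hn] := Hb m N; exists n => // i im.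
by rewrite Hn // => bi; apply: As0; exists i.+1 => //; exists i.
Qed.

Section Series.
Local Open Scope ereal_scope.
Variable R : realType.

Lemma nneseries_sup (u : nat -> \bar R) : (forall i, 0 <= u i) ->
  \sum_(i <oo) u i = ereal_sup (range (fun N => \sum_(0 <= i < N) u i)).
Proof.
move=> u_ge0; have := @ereal_nondecreasing_series _ u xpredT 0%N (fun n _ _ => u_ge0 n).
by move/ereal_nondecreasing_cvgn/cvg_lim => ->.
Qed.

Lemma nneseries_finite (u : nat -> R) n : (forall i, (0 <= u i)%R) ->
    (forall i, (n <= i)%N -> u i = 0%R) ->
  \sum_(i <oo) (u i)%:E = (\sum_(i < n) u i)%:E.
Proof.
move=> u_ge0 u0; rewrite (nneseries_split _ n); last by move=> k _; rewrite lee_fin.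
rewrite eseries0; last by move=> i ni _; rewrite u0.
by rewrite adde0 add0n sumEFin big_mkord.
Qed.

Lemma nneseries_tail (u : nat -> R) : (forall i, (0 <= u i)%R) ->
    \sum_(i <oo) (u i)%:E = 1 ->
  forall eps, (0 < eps)%R -> exists m, \sum_(m <= i <oo) (u i)%:E <= eps%:E.
Proof.
move=> u_ge0 u1 eps eps0.
have : (1 - eps)%:E < \sum_(i <oo) (u i)%:E by rewrite u1 lte_fin; lra.
rewrite nneseries_sup; last by move=> i; rewrite lee_fin.
case/ereal_sup_gt => _ [m _ <-] hm; exists m.
move: u1; rewrite (nneseries_split _ m); last by move=> k _; rewrite lee_fin.
rewrite add0n sumEFin => u1.
rewrite -(@leeD2lE _ (\sum_(0 <= i < m) u i)%:E) // u1 -EFinD lee_fin.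
by move: hm; rewrite sumEFin lte_fin; lra.
Qed.

End Series.

Section EnumeratedSums.
Local Open Scope ereal_scope.
Variables (R : realType) (X : choiceType) (en : nat -> X).
Hypothesis en_bij : bijective en.

Lemma esum_enum (a : X -> \bar R) : (forall x, 0 <= a x) ->
  \esum_(x in [set: X]) a x = \sum_(i <oo) a (en i).
Proof.
move=> a_ge0; rewrite (reindex_esum [set: nat] [set: X] en a); last by rewrite setTT_bijective.
by rewrite nneseries_esumT.
Qed.

Lemma esumZl_enum (c : R) (a : X -> \bar R) : (0 <= c)%R -> (forall x, 0 <= a x) ->
  \esum_(x in [set: X]) (c%:E * a x) = c%:E * \esum_(x in [set: X]) a x.
Proof.
move=> c_ge0 a_ge0; rewrite !esum_enum //; last by move=> x; rewrite mule_ge0.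
by rewrite nneseriesZl.
Qed.

Lemma esum_distr_le (p : X -> R) (Y : X -> \bar R) (M : R) : distr R X p ->
  (forall x, 0 <= Y x) -> (0 <= M)%R -> (forall x, Y x <= M%:E) ->
  \esum_(x in [set: X]) ((p x)%:E * Y x) <= M%:E.
Proof.
move=> [p_ge0 p1] Y_ge0 M_ge0 YM.
apply: le_trans (_ : \esum_(x in [set: X]) (M%:E * (p x)%:E) <= _).
  by apply: le_esum => x _; rewrite [M%:E * _]muleC lee_pmul ?lee_fin.
by rewrite esumZl_enum // p1 mule1.
Qed.

Lemma esum_distr_ge (p : X -> R) (Y : X -> \bar R) (m : R) : distr R X p ->
  (0 <= m)%R -> (forall x, m%:E <= Y x) ->
  m%:E <= \esum_(x in [set: X]) ((p x)%:E * Y x).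
Proof.
move=> [p_ge0 p1] m_ge0 mY.
apply: le_trans (_ : _ <= \esum_(x in [set: X]) (m%:E * (p x)%:E)) _.
  by rewrite esumZl_enum // p1 mule1.
by apply: le_esum => x _; rewrite [m%:E * _]muleC lee_pmul ?lee_fin.
Qed.

End EnumeratedSums.

Section Dirac.
Local Open Scope ereal_scope.
Variables (R : realType) (X : choiceType).

Definition dirac (x0 : X) : X -> R := fun x => (x == x0)%:R.

Lemma esum_dirac (x0 : X) (Y : X -> \bar R) : (forall x, 0 <= Y x) ->
  \esum_(x in [set: X]) ((dirac x0 x)%:E * Y x) = Y x0.
Proof.
move=> Y_ge0; rewrite (eq_esum (b := fun x => if x \in [set x0] then Y x else 0)).
  by rewrite -esum_mkcond esum_set1.
move=> x _; rewrite /dirac; case: eqP => [->|nx]; first by rewrite mem_set // mul1e.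
by rewrite memNset ?mul0e.
Qed.

Lemma dirac_distr (x0 : X) : distr R X (dirac x0).
Proof.
split; first by move=> x; rewrite /dirac ler0n.
rewrite (eq_esum (b := fun x => (dirac x0 x)%:E * 1)); last by move=> x _; rewrite mule1.
by rewrite esum_dirac.
Qed.

End Dirac.

Section BestResponse.
Local Open Scope ereal_scope.
Variables (R : realType) (S T : Type) (pi : S -> T -> bool) (e : nat -> T).
Hypothesis hF : ascending_union_closed (B1down pi).
Variable q : nat -> R.
Hypotheses (q_ge0 : forall i, (0 <= q i)%R) (q_sum1 : \sum_(i <oo) (q i)%:E = 1).

Definition seq_payoff (s : S) := \sum_(i <oo) (q i * (pi s (e i))%:R)%:E.

Lemma seq_payoff_ge0 s : 0 <= seq_payoff s.
Proof. by apply: nneseries_ge0 => i _ _; rewrite lee_fin mulr_ge0 ?ler0n. Qed.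

Lemma seq_payoff_le1 s : seq_payoff s <= 1.
Proof.
rewrite -q_sum1; apply: lee_nneseries => [i _ _|i _]; rewrite lee_fin ?mulr_ge0 ?ler0n //.
by rewrite ler_piMr //; case: (pi s (e i)).
Qed.

Lemma seq_payoff_le_prefix s s' m (eps : R) :
    \sum_(m <= i <oo) (q i)%:E <= eps%:E ->
    (forall i, (i < m)%N -> pi s (e i) -> pi s' (e i)) ->
  seq_payoff s <= seq_payoff s' + eps%:E.
Proof.
move=> tail dom; have term_ge0 s'' i : 0 <= (q i * (pi s'' (e i))%:R)%:E.
  by rewrite lee_fin mulr_ge0 ?ler0n.
rewrite /seq_payoff (nneseries_split _ m) ?add0n; last by move=> k _.
apply: leeD.
  apply: le_trans (nneseries_lim_ge m (fun i _ _ => term_ge0 s' i)).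
  rewrite !sumEFin lee_fin; apply: ler_sum_nat => i /= im.
  by apply: ler_wpM2l => //; case: (pi s (e i)) (dom i im) => // ->.
apply: le_trans tail; apply: lee_nneseries => [i _ _|i _]; first exact: term_ge0.
by rewrite lee_fin ler_piMr //; case: (pi s (e i)).
Qed.

Lemma exists_best_response (s1 : S) : exists s0, forall s, seq_payoff s <= seq_payoff s0.
Proof.
pose sig := ereal_sup (range seq_payoff).
have sig_fin : sig \is a fin_num.
  rewrite ge0_fin_numE; last first.
    by apply: le_trans (seq_payoff_ge0 s1) _; apply: ereal_sup_ubound; exists s1.
  by apply: le_lt_trans (ltey 1); apply: ge_ereal_sup => _ [s _ <-]; exact: seq_payoff_le1.
have /choice[s_ near_sig] n : exists s, sig - (n.+1%:R^-1)%:E < seq_payoff s.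
  have : sig - (n.+1%:R^-1)%:E < sig by rewrite lteBlDr // lteDl // lte_fin invr_gt0.
  by case/ereal_sup_gt => _ [s _ <-]; exists s.
have [s0 Hs0] := exists_dominating_cluster e hF s_; exists s0.
suff le_sig : sig <= seq_payoff s0.
  by move=> s; apply: le_trans le_sig; apply: ereal_sup_ubound; exists s.
apply/lee_addgt0Pr => eps eps0; have eps2 : (0 < eps / 2)%R by rewrite divr_gt0.
have [m tail] := nneseries_tail q_ge0 q_sum1 eps2.
have [n nN dom] := Hs0 m (Num.truncn (eps / 2)^-1).
have inv_le : (n.+1%:R^-1 <= eps / 2)%R.
  rewrite -[leRHS]invrK lef_pV2 ?posrE ?invr_gt0 ?ltr0n //; apply: ltW.
  by apply: lt_le_trans (truncnS_gt _) _; rewrite ler_nat.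
have : sig <= seq_payoff (s_ n) + (eps / 2)%:E.
  apply: le_trans (_ : _ <= seq_payoff (s_ n) + (n.+1%:R^-1)%:E) _.
    by rewrite -leeBlDr // ltW.
  by apply: leeD; rewrite ?lee_fin.
move/le_trans/(_ (leeD2r _ (seq_payoff_le_prefix tail dom))).
by rewrite -addeA -EFinD -splitr.
Qed.

End BestResponse.

Section MixedPayoff.
Local Open Scope ereal_scope.
Variables (R : realType) (S T : choiceType) (pi : S -> T -> bool).
Variables (f : nat -> S) (e : nat -> T).
Hypotheses (f_bij : bijective f) (e_bij : bijective e).

Definition row_payoff (q : T -> R) (s : S) := \esum_(t in [set: T]) (q t * (pi s t)%:R)%:E.
Definition col_payoff (p : S -> R) (t : T) := \esum_(s in [set: S]) (p s * (pi s t)%:R)%:E.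

Lemma row_payoff_ge0 q s : (forall t, (0 <= q t)%R) -> 0 <= row_payoff q s.
Proof. by move=> q_ge0; apply: esum_ge0 => t _; rewrite lee_fin mulr_ge0 ?ler0n. Qed.

Lemma row_payoff_le1 q s : distr R T q -> row_payoff q s <= 1.
Proof.
move=> [q_ge0 q1]; rewrite -q1; apply: le_esum => t _.
by rewrite lee_fin ler_piMr //; case: (pi s t).
Qed.

Lemma pimix_row p q : distr R S p -> distr R T q ->
  pimix pi p q = \esum_(s in [set: S]) ((p s)%:E * row_payoff q s).
Proof.
move=> [p_ge0 _] [q_ge0 _].
rewrite /pimix (_ : [set: S * T] = [set: S] `*`` (fun=> [set: T])); last by apply/seteqP.
rewrite -(esum_esum (a := fun s t => (p s * q t * (pi s t)%:R)%:E)); last first.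
  by move=> s t _ _; rewrite lee_fin !mulr_ge0 ?ler0n.
apply: eq_esum => s _; rewrite /row_payoff -(esumZl_enum e_bij) //; last first.
  by move=> t; rewrite lee_fin mulr_ge0 ?ler0n.
by apply: eq_esum => t _; rewrite -EFinM mulrA.
Qed.

Lemma pimix_col p q : distr R S p -> distr R T q ->
  pimix pi p q = \esum_(t in [set: T]) ((q t)%:E * col_payoff p t).
Proof.
move=> [p_ge0 _] [q_ge0 _]; rewrite /pimix.
rewrite (reindex_esum [set: T * S] [set: S * T] (fun ts => (ts.2, ts.1))); last first.
  by rewrite setTT_bijective; exists (fun st => (st.2, st.1)); case.
rewrite (_ : [set: T * S] = [set: T] `*`` (fun=> [set: S])); last by apply/seteqP.
rewrite -(esum_esum (a := fun t s => (p s * q t * (pi s t)%:R)%:E)); last first.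
  by move=> t s _ _; rewrite lee_fin !mulr_ge0 ?ler0n.
apply: eq_esum => t _; rewrite /col_payoff -(esumZl_enum f_bij) //; last first.
  by move=> s; rewrite lee_fin mulr_ge0 ?ler0n.
by apply: eq_esum => s _ /=; rewrite -EFinM mulrA (mulrC (q t)).
Qed.

Lemma pimix_ge0 p q : distr R S p -> distr R T q -> 0 <= pimix pi p q.
Proof.
by move=> [p_ge0 _] [q_ge0 _]; apply: esum_ge0 => st _; rewrite lee_fin !mulr_ge0 ?ler0n.
Qed.

Lemma pimix_le1 p q : distr R S p -> distr R T q -> pimix pi p q <= 1.
Proof.
move=> hp hq; rewrite pimix_row //; apply: (esum_distr_le f_bij) => // s.
  exact: row_payoff_ge0 (proj1 hq) .
exact: row_payoff_le1.
Qed.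

Lemma pimix_dirac_row s0 q : distr R T q -> pimix pi (dirac R s0) q = row_payoff q s0.
Proof.
move=> hq; rewrite pimix_row //; last exact: dirac_distr.
by apply: esum_dirac => s; exact: row_payoff_ge0 (proj1 hq).
Qed.

Hypothesis hF : ascending_union_closed (B1down pi).

Lemma exists_pure_best_response q : distr R T q ->
  exists s0, forall p, distr R S p -> pimix pi p q <= row_payoff q s0.
Proof.
move=> hq; have [q_ge0 q1] := hq.
have qe_ge0 i : (0 <= q (e i))%R by [].
have qe1 : \sum_(i <oo) (q (e i))%:E = 1 by rewrite -q1 (esum_enum e_bij) // => t; rewrite lee_fin.
have row_seq s : row_payoff q s = seq_payoff pi e (q \o e) s.
  by rewrite /row_payoff (esum_enum e_bij) // => t; rewrite lee_fin mulr_ge0 ?ler0n.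
have [s0 best] := exists_best_response e hF qe_ge0 qe1 (f 0%N).
exists s0 => p hp; rewrite pimix_row //.
have row_fin : row_payoff q s0 \is a fin_num.
  by rewrite ge0_fin_numE ?row_payoff_ge0 // (le_lt_trans (row_payoff_le1 s0 hq)) ?ltey.
rewrite -(fineK row_fin); apply: (esum_distr_le f_bij hp).
- by move=> s; exact: row_payoff_ge0.
- by rewrite fine_ge0 // row_payoff_ge0.
- by move=> s; rewrite fineK // !row_seq.
Qed.

End MixedPayoff.

Section Approachability.
Variables (R : archiRealFieldType) (S : Type) (n : nat) (g : S -> nat -> bool) (c : R).
Hypotheses (c_ge0 : 0 <= c) (c_le1 : c <= 1).
Hypothesis best_reply : forall w : nat -> R, (forall j, 0 <= w j) ->
  exists s, c * \sum_(j < n) w j <= \sum_(j < n) w j * (g s j)%:R.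

Definition deficit (l : seq S) (j : nat) : R :=
  c * (size l)%:R - (count (g^~ j) l)%:R.

Definition potential (l : seq S) : R := \sum_(j < n) Num.max (deficit l j) 0 ^+ 2.

Lemma deficit_cons s l j : deficit (s :: l) j = deficit l j + (c - (g s j)%:R).
Proof. by rewrite /deficit /= natrD -addn1 natrD; ring. Qed.

Lemma max0_shift_sqr (a y : R) : -1 <= y -> y <= 1 ->
  Num.max (a + y) 0 ^+ 2 <= Num.max a 0 ^+ 2 + 2 * (Num.max a 0 * y) + 1.
Proof.
move=> y_ge y_le; have [a0|a0] := lerP a 0; have [ay0|ay0] := lerP (a + y) 0;
  rewrite ?(max_r a0) ?(max_r ay0) ?(max_l (ltW a0)) ?(max_l (ltW ay0)); nra.
Qed.

Lemma potential_cons s l :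
    \sum_(j < n) Num.max (deficit l j) 0 * (c - (g s j)%:R) <= 0 ->
  potential (s :: l) <= potential l + n%:R.
Proof.
move=> regret; apply: le_trans (_ : \sum_(j < n) (Num.max (deficit l j) 0 ^+ 2
  + 2 * (Num.max (deficit l j) 0 * (c - (g s j)%:R)) + 1) <= _).
  apply: ler_sum => j _; rewrite deficit_cons; apply: max0_shift_sqr;
    by case: (g s j); rewrite /= ?mulr1n ?mulr0n ?subr0; have := c_ge0; have := c_le1; lra.
rewrite !big_split /= sumr_const card_ord -mulr_sumr lerD2r -[leRHS]addr0 lerD2l.
by rewrite pmulr_rle0.
Qed.

Lemma exists_low_potential N : exists2 l : seq S, size l = N & potential l <= N%:R * n%:R.
Proof.
elim: N => [|N [l <- Pl]].
  exists [::] => //; rewrite mul0r /potential big1 // => j _.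
  by rewrite /deficit /= mulr0 subr0 maxxx expr0n.
have w_ge0 j : 0 <= Num.max (deficit l j) 0 by rewrite le_max lexx orbT.
have [s Hs] := best_reply w_ge0.
exists (s :: l) => //; apply: le_trans (potential_cons _) _.
  rewrite -subr_le0 mulr_sumr -sumrB in Hs; apply: le_trans Hs.
  by under eq_bigr do rewrite mulrBr [_ * c]mulrC.
by rewrite /= -addn1 natrD mulrDl mul1r lerD2r.
Qed.

Lemma approachability eps : 0 < eps -> exists2 l : seq S, (0 < size l)%N &
  forall j, (j < n)%N -> (c - eps) * (size l)%:R <= (count (g^~ j) l)%:R.
Proof.
move=> eps0; pose N := (Num.truncn (n%:R / eps ^+ 2)).+1.
have [l szl Pl] := exists_low_potential N.
exists l => [|j jn]; first by rewrite szl.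
suff : deficit l j <= eps * N%:R by rewrite /deficit szl; lra.
rewrite leNgt; apply/negP => big.
have N_big : n%:R < eps ^+ 2 * N%:R.
  by rewrite -ltr_pdivrMl ?exprn_gt0 // mulrC; apply: truncnS_gt.
have : Num.max (deficit l j) 0 ^+ 2 <= potential l.
  rewrite /potential (bigD1 (Ordinal jn)) //= lerDl.
  by apply: sumr_ge0 => i _; apply: sqr_ge0.
have N0 : 0 < N%:R :> R by rewrite ltr0n.
have eN0 : 0 < eps * N%:R by rewrite mulr_gt0.
rewrite max_l => [def_pot|]; last by apply: ltW; apply: lt_trans big.
have : eps ^+ 2 * N%:R * N%:R < deficit l j ^+ 2 by nra.
nra.
Qed.

End Approachability.

Definition finitely_additive_probability (S : Type) (R : numDomainType)
    (lam : set S -> R) :=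
  [/\ forall X, 0 <= lam X, lam setT = 1 &
      forall X Y, X `&` Y = set0 -> lam (X `|` Y) = lam X + lam Y].

Section FinitelyAdditiveProbability.
Variables (R : realFieldType) (S : Type) (lam : set S -> R).
Hypothesis lamP : finitely_additive_probability lam.

Lemma fap_ge0 X : 0 <= lam X. Proof. by case: lamP. Qed.

Lemma fapT : lam setT = 1. Proof. by case: lamP. Qed.

Lemma fapU X Y : X `&` Y = set0 -> lam (X `|` Y) = lam X + lam Y.
Proof. by case: lamP => _ _; apply. Qed.

Lemma fap0 : lam set0 = 0.
Proof. by have := fapU (setI0 set0); rewrite setU0; lra. Qed.

Lemma fap_split X Y : lam X = lam (X `&` Y) + lam (X `&` ~` Y).
Proof.
rewrite -fapU; last by rewrite setIACA setICr setI0.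
by rewrite -setIUr setUCr setIT.
Qed.

Lemma fap_le X Y : X `<=` Y -> lam X <= lam Y.
Proof.
by move=> XY; rewrite (fap_split Y X) (setIidr XY) lerDl fap_ge0.
Qed.

Lemma fapC X : lam (~` X) = 1 - lam X.
Proof. by rewrite -fapT (fap_split setT X) !setTI addrC addKr. Qed.

Lemma fapD X Y : Y `<=` X -> lam (X `&` ~` Y) = lam X - lam Y.
Proof. by move=> YX; rewrite [lam X](fap_split X Y) (setIidr YX) addrAC subrr add0r. Qed.

Lemma fap_gt0_neq0 X : 0 < lam X -> X !=set0.
Proof. by move=> X0; apply/set0P/eqP => X_eq0; move: X0; rewrite X_eq0 fap0 ltxx. Qed.

Lemma fap_bigcap_ge (X : set S) (Y : nat -> set S) J :
  lam X - \sum_(k < J) lam (X `&` ~` Y k) <=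
  lam [set s | X s /\ forall k, (k < J)%N -> Y k s].
Proof.
elim: J => [|J IH]; first by rewrite big_ord0 subr0; apply: fap_le => s Xs; split.
set W := [set s | _ /\ _] in IH; rewrite big_ord_recr /=.
have -> : [set s | X s /\ forall k, (k < J.+1)%N -> Y k s] = W `&` Y J.
  apply/seteqP; split => s /= [Xs Ys].
    by split; [split=> // k kJ; apply: Ys; exact: ltnW | apply: Ys].
  by case: Xs => Xs Ys'; split => // k; rewrite ltnS leq_eqVlt => /orP[/eqP ->|/Ys'].
have : lam (W `&` ~` Y J) <= lam (X `&` ~` Y J) by apply: fap_le => s [[]].
have := fap_split W (Y J); lra.
Qed.

End FinitelyAdditiveProbability.

Lemma ultra_cvg_compact (I : Type) (T : ptopologicalType) (K : set T)
    (U : set_system I) (x : I -> T) :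
  UltraFilter U -> compact K -> (forall i, K (x i)) -> cvg (x @ U).
Proof.
move=> UU cK xK; have [l [_ cl]] := cK (x @ U) _ (filterS (fun i _ => xK i) filterT).
apply/cvg_ex; exists l => A Al.
have [//|UnA] := in_ultra_setVsetC (x @^-1` A) UU.
by have [a [/= nAa Aa]] := cl (~` A) A UnA Al.
Qed.

Definition freq {R : numFieldType} {S : Type} (l : seq S) (X : set S) : R :=
  (count (fun s => `[< X s >]) l)%:R / (size l)%:R.

Lemma ultralimit_freq (R : realType) (S : Type) (L : nat -> seq S) :
  (forall N, (0 < size (L N))%N) ->
  exists lam : set S -> R, finitely_additive_probability lam /\
    forall X c, (forall eps, 0 < eps -> \forall N \near \oo, c - eps <= freq (L N) X) ->
      c <= lam X.
Proof.
move=> L_gt0; have [U [UU ooU]] := ultraFilterLemma (@eventually_filter).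
pose fr X N : R := freq (L N) X.
have size_gt0 N : 0 < (size (L N))%:R :> R by rewrite ltr0n.
have freq01 X N : `[0, 1]%classic (fr X N).
  rewrite /= in_itv /= /fr /freq divr_ge0 ?ler0n ?ler_pdivrMr // mul1r ler_nat.
  by rewrite count_size.
have cvg_freq X : cvg (fr X @ U).
  exact: ultra_cvg_compact UU (@segment_compact R 0 1) (freq01 X).
exists (fun X => lim (fr X @ U)); split; first split.
- by move=> X; apply: limr_ge => //; apply: nearW => N; case/andP: (freq01 X N).
- have freqT N : fr setT N = 1.
    rewrite /fr /freq (eq_count (a2 := predT)) ?count_predT ?divff ?gt_eqF //.
    by move=> s; rewrite asboolT.
  have -> : fr setT = fun=> 1 by apply/funext.
  exact: lim_cst.
- move=> X Y XY0; have freqU N : fr (X `|` Y) N = fr X N + fr Y N.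
    rewrite /fr /freq -mulrDl -natrD -count_predUI (eq_count (a1 := predI _ _) (a2 := pred0)).
      by rewrite count_pred0 addn0; congr (_%:R / _); apply: eq_count => s; rewrite asbool_or.
    move=> s /=; apply/negbTE/negP => /andP[/asboolP Xs /asboolP Ys].
    by have : (X `&` Y) s by []; rewrite XY0.
  have -> : fr (X `|` Y) = fr X \+ fr Y by apply/funext.
  exact: limD.
move=> X c near_c; apply/ler_addgt0Pr => eps eps0; rewrite -lerBlDr.
by apply: limr_ge => //; apply: ooU; exact: near_c.
Qed.

Lemma sum_halving (R : fieldType) (eps : R) J : 2 != 0 :> R ->
  \sum_(k < J) eps / 2 ^+ k.+2 = eps / 2 - eps / 2 ^+ J.+1.
Proof.
move=> two_neq0; elim: J => [|J IH]; first by rewrite big_ord0 expr1 subrr.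
rewrite big_ord_recr /= IH !exprS; field.
by rewrite two_neq0 expf_neq0.
Qed.

Section Regularization.
Variables (R : realType) (S T : Type) (pi : S -> T -> bool) (e : nat -> T) (f : nat -> S).
Hypotheses (e_surj : forall t, exists i, e i = t) (f_surj : forall s, exists k, f k = s).
Hypothesis hF : ascending_union_closed (B1down pi).
Variable lam : set S -> R.
Hypothesis lamP : finitely_additive_probability lam.

Definition dominated (s : S) (k m : nat) :=
  forall i, (i < m)%N -> pi s (e i) -> pi (f k) (e i).

Definition dominated_set (m K : nat) := [set s | exists2 k, (k < K)%N & dominated s k m].

Definition dominated_mass (m K : nat) := lam (dominated_set m K).

Definition limit_mass (K : nat) := inf (range (dominated_mass ^~ K)).

Lemma dominated_setSm m m' K : (m <= m')%N -> dominated_set m' K `<=` dominated_set m K.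
Proof. by move=> mm s [k kK dom]; exists k => // i im; apply: dom; exact: leq_trans im mm. Qed.

Lemma dominated_setSK m K K' : (K <= K')%N -> dominated_set m K `<=` dominated_set m K'.
Proof. by move=> KK s [k kK dom]; exists k => //; exact: leq_trans kK KK. Qed.

Lemma dominated_set0 m : dominated_set m 0 = set0.
Proof. by apply/seteqP; split => // s [k]. Qed.

Lemma dominated_mass_ge0 m K : 0 <= dominated_mass m K. Proof. exact: (fap_ge0 lamP). Qed.

Lemma dominated_mass_le1 m K : dominated_mass m K <= 1.
Proof. by rewrite -(fapT lamP); apply: (fap_le lamP). Qed.

Lemma has_inf_dominated_mass K : has_inf (range (dominated_mass ^~ K)).
Proof.
by split; [exists (dominated_mass 0 K), 0%N | exists 0 => _ [m _ <-]; exact: dominated_mass_ge0].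
Qed.

Lemma limit_mass_le m K : limit_mass K <= dominated_mass m K.
Proof. by apply: ge_inf; [case: (has_inf_dominated_mass K) | exists m]. Qed.

Lemma limit_mass_ge0 K : 0 <= limit_mass K.
Proof.
apply: lb_le_inf; first by exists (dominated_mass 0 K), 0%N.
by move=> _ [m _ <-]; exact: dominated_mass_ge0.
Qed.

Lemma limit_mass_le1 K : limit_mass K <= 1.
Proof. exact: le_trans (limit_mass_le 0 K) (dominated_mass_le1 _ _). Qed.

Lemma limit_mass0 : limit_mass 0 = 0.
Proof.
apply/eqP; rewrite eq_le limit_mass_ge0 andbT; apply: le_trans (limit_mass_le 0 0) _.
by rewrite /dominated_mass dominated_set0 (fap0 lamP).
Qed.

Lemma limit_mass_nondecreasing : {homo limit_mass : K K' / (K <= K')%N >-> K <= K'}.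
Proof.
move=> K K' KK; apply: lb_le_inf; first by exists (dominated_mass 0 K'), 0%N.
move=> _ [m _ <-]; apply: le_trans (limit_mass_le m K) _.
by apply: (fap_le lamP); exact: dominated_setSK.
Qed.

Lemma dominated_mass_near K eps : 0 < eps ->
  exists m0, forall m k, (m0 <= m)%N -> (k <= K)%N -> dominated_mass m k < limit_mass k + eps.
Proof.
move=> eps0; have approx k :
    exists m0, forall m, (m0 <= m)%N -> dominated_mass m k < limit_mass k + eps.
  have [_ [m _ <-] hm] := inf_adherent eps0 (has_inf_dominated_mass k).
  by exists m => m' mm; apply: le_lt_trans hm; apply: (fap_le lamP); exact: dominated_setSm.
elim: K => [|K [m0 IH]].
  by have [m0 H] := approx 0%N; exists m0 => m k mm; rewrite leqn0 => /eqP ->; exact: H.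
have [m1 H] := approx K.+1; exists (maxn m0 m1) => m k; rewrite geq_max => /andP[m0m m1m].
by rewrite leq_eqVlt => /orP[/eqP ->|]; [exact: H | exact: IH].
Qed.

Lemma no_escaping_sequence (m_ : nat -> nat) (s_ : nat -> S) :
  ~ (forall n k, (k <= n)%N -> ~ dominated_set (m_ k) k (s_ n)).
Proof.
move=> escape; have [s0 Hs0] := exists_dominating_cluster e hF s_.
have [k0 fk0] := f_surj s0; have [n kn dom] := Hs0 (m_ k0.+1) k0.+1.
by apply: (escape n k0.+1 kn); exists k0 => // i im; rewrite fk0; exact: dom.
Qed.

Lemma escaping_mass_gt0 eps (m_ : nat -> nat) : 0 < eps ->
    (forall K, limit_mass K < 1 - eps) ->
    (forall k, dominated_mass (m_ k) k < limit_mass k + eps / 2 ^+ k.+2) ->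
  forall n, 0 < lam [set s | forall k, (k <= n)%N -> ~ dominated_set (m_ k) k s].
Proof.
move=> eps0 small near n; pose d k := eps / 2 ^+ k.+2.
pose Q k := ~` dominated_set (m_ k) k.
have lamQ k : eps - d k < lam (Q k).
  by rewrite fapC //; have := near k; have := small k; rewrite /dominated_mass /d; lra.
have lamQD k : (k <= n)%N -> lam (Q n `&` ~` Q k) <= d k.
  move=> kn; pose M := maxn (m_ n) (m_ k).
  have sub : Q n `&` ~` Q k `<=` dominated_set (m_ k) k `&` ~` dominated_set M k.
    move=> s [Qn /contrapT domk]; split => // domM; apply: Qn.
    by apply: (dominated_setSm (leq_maxl (m_ n) (m_ k))); exact: dominated_setSK kn _ domM.
  apply: le_trans (fap_le lamP sub) _.
  rewrite (fapD lamP); last by apply: dominated_setSm; exact: leq_maxr.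
  by have := limit_mass_le M k; have := near k; rewrite /dominated_mass /d; lra.
have lamW := fap_bigcap_ge lamP (Q n) Q n.
apply: lt_le_trans (le_trans lamW (fap_le lamP _)); last first.
  by move=> s [Qns Qs] k; rewrite leq_eqVlt => /orP[/eqP ->|/Qs].
have : \sum_(k < n) lam (Q n `&` ~` Q k) <= \sum_(k < n) d k.
  by apply: ler_sum => k _; apply: lamQD; exact: ltnW.
rewrite sum_halving ?pnatr_eq0 //; have := lamQ n; rewrite /d !exprS.
have : 0 < eps / (2 * (2 * 2 ^+ n)) by rewrite divr_gt0 // !mulr_gt0 ?exprn_gt0.
lra.
Qed.

Lemma limit_mass_to1 eps : 0 < eps -> exists K, 1 - eps <= limit_mass K.
Proof.
move=> eps0; apply: contrapT => /forallNP small.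
have {}small K : limit_mass K < 1 - eps by rewrite ltNge; apply/negP; exact: small.
have /choice[m_ near] k : exists m, dominated_mass m k < limit_mass k + eps / 2 ^+ k.+2.
  have [m0 Hm0] := dominated_mass_near k (divr_gt0 eps0 (exprn_gt0 k.+2 (@ltr0Sn R 1))).
  by exists m0; exact: Hm0.
have /choice[s_ escape] n : exists s, forall k, (k <= n)%N -> ~ dominated_set (m_ k) k s.
  by have [s] := fap_gt0_neq0 lamP (escaping_mass_gt0 eps0 small near n); exists s.
exact: (no_escaping_sequence escape).
Qed.

Lemma cover_dominated_set t m K : (exists2 j, (j < m)%N & e j = t) ->
  lam ([set s | pi s t] `&` dominated_set m K) <=
  \sum_(k < K) (pi (f k) t)%:R * (dominated_mass m k.+1 - dominated_mass m k).
Proof.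
move=> [j jm <-]; elim: K => [|K IH]; first by rewrite big_ord0 dominated_set0 setI0 (fap0 lamP).
rewrite big_ord_recr /= (fap_split lamP _ (dominated_set m K)).
rewrite -setIA (setIidr (dominated_setSK (leqnSn K))); apply: lerD => //.
(* A row first dominated by f K on the first m columns wins at e j only if f K does. *)
case piK : (pi (f K) (e j)); rewrite ?mul1r ?mul0r.
  rewrite /dominated_mass -(fapD lamP); last exact: dominated_setSK.
  by apply: (fap_le lamP) => s [[_ ?] ?].
rewrite (_ : _ `&` _ = set0) ?(fap0 lamP) //; apply/seteqP; split => // s [[/= pis [k]]].
rewrite ltnS leq_eqVlt => /orP[/eqP ->|kK] dom nK; last by apply: nK; exists k.
by move: (dom j jm pis); rewrite piK.
Qed.

Definition mass_increment k := limit_mass k.+1 - limit_mass k.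

Lemma sum_mass_increment K : \sum_(k < K) mass_increment k = limit_mass K.
Proof. by rewrite -(big_mkord xpredT mass_increment) telescope_sumr // limit_mass0 subr0. Qed.

Variable v : R.
Hypothesis lam_cover : forall t, v <= lam [set s | pi s t].

Lemma cover_mass_increment t K eps : 0 < eps ->
  v - 1 + limit_mass K - eps <= \sum_(k < K) mass_increment k * (pi (f k) t)%:R.
Proof.
move=> eps0; have [j ejt] := e_surj t; pose eps' := eps / K.+1%:R.
have eps'0 : 0 < eps' by rewrite divr_gt0.
have [m0 near] := dominated_mass_near K eps'0; pose m := maxn m0 j.+1.
have jm : exists2 j, (j < m)%N & e j = t by exists j => //; exact: leq_maxr.
have lower : v - 1 + limit_mass K <= lam ([set s | pi s t] `&` dominated_set m K).
  have := fap_split lamP [set s | pi s t] (dominated_set m K).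
  have : lam ([set s | pi s t] `&` ~` dominated_set m K) <= 1 - dominated_mass m K.
    by rewrite -(fapC lamP); apply: (fap_le lamP) => s [].
  by have := lam_cover t; have := limit_mass_le m K; lra.
have upper : \sum_(k < K) (pi (f k) t)%:R * (dominated_mass m k.+1 - dominated_mass m k)
    <= \sum_(k < K) (mass_increment k * (pi (f k) t)%:R + eps').
  apply: ler_sum => k _; case: (pi (f k) t);
    rewrite ?mul1r ?mulr1 ?mul0r ?mulr0 ?add0r ?(ltW eps'0) //.
  have := near m k.+1 (leq_maxl _ _) (ltn_ord k); have := limit_mass_le m k.
  by rewrite /mass_increment; lra.
have sum_eps' : \sum_(k < K) eps' <= eps.
  rewrite sumr_const card_ord -mulr_natr /eps' mulrAC ler_pdivrMr ?ltr0n //.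
  by rewrite ler_pM2l // ler_nat.
move: upper; rewrite big_split /=; have := cover_dominated_set K jm; lra.
Qed.

Lemma regularize : exists a : nat -> R, [/\ forall k, 0 <= a k,
  (\sum_(k <oo) (a k)%:E = 1)%E &
  forall t, (v%:E <= \sum_(k <oo) (a k * (pi (f k) t)%:R)%:E)%E].
Proof.
have a_ge0 k : 0 <= mass_increment k by rewrite subr_ge0 limit_mass_nondecreasing.
exists mass_increment; split => //.
- have a_ge0E k : (0 <= (mass_increment k)%:E)%E by rewrite lee_fin.
  apply/eqP; rewrite eq_le; apply/andP; split.
    apply: lime_le; first exact: is_cvg_nneseries.
    by apply: nearW => K; rewrite sumEFin big_mkord sum_mass_increment lee_fin limit_mass_le1.
  apply/lee_addgt0Pr => eps eps0; have [K HK] := limit_mass_to1 eps0.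
  apply: le_trans (leeD (nneseries_lim_ge K (fun k _ _ => a_ge0E k)) (lexx _)).
  by rewrite sumEFin big_mkord sum_mass_increment -EFinD lee_fin; lra.
move=> t; apply/lee_addgt0Pr => eps eps0.
have eps2 : 0 < eps / 2 by rewrite divr_gt0.
have [K HK] := limit_mass_to1 eps2.
have a_pi_ge0 k : (0 <= (mass_increment k * (pi (f k) t)%:R)%:E)%E.
  by rewrite lee_fin mulr_ge0 ?ler0n.
apply: le_trans (leeD (nneseries_lim_ge K (fun k _ _ => a_pi_ge0 k)) (lexx _)).
rewrite sumEFin big_mkord -EFinD lee_fin.
by have := cover_mass_increment t K eps2; lra.
Qed.

End Regularization.

Section Guarantee.
Variables (R : realType) (S T : choiceType) (pi : S -> T -> bool).
Variables (f : nat -> S) (e : nat -> T).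
Hypotheses (f_bij : bijective f) (e_bij : bijective e).
Hypothesis hF : ascending_union_closed (B1down pi).
Variable v : R.
Hypotheses (v_ge0 : 0 <= v) (v_le1 : v <= 1).
Hypothesis row_reply : forall q, distr R T q -> exists s, (v%:E <= row_payoff pi q s)%E.

Lemma finite_reply n (w : nat -> R) : (forall j, 0 <= w j) ->
  exists s, v * \sum_(j < n) w j <= \sum_(j < n) w j * (pi s (e j))%:R.
Proof.
move=> w_ge0; have [einv ee1 ee2] := e_bij; pose W := \sum_(j < n) w j.
have [W0|W_neq0] := eqVneq W 0.
  by exists (f 0%N); rewrite -/W W0 mulr0; apply: sumr_ge0 => j _; rewrite mulr_ge0 ?ler0n.
have W_gt0 : 0 < W by rewrite lt0r W_neq0 sumr_ge0.
pose q t := (if (einv t < n)%N then w (einv t) else 0) / W.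
have qe i : q (e i) = (if (i < n)%N then w i else 0) / W by rewrite /q ee1.
have q_ge0 t : 0 <= q t by rewrite /q divr_ge0 ?(ltW W_gt0) //; case: ifP.
have qe0 i : (n <= i)%N -> q (e i) = 0 by move=> ni; rewrite qe ltnNge ni mul0r.
have sum_qe : \sum_(i < n) q (e i) = 1.
  rewrite (eq_bigr (fun j : 'I_n => w j / W)) => [|j _]; last by rewrite qe ltn_ord.
  by rewrite -mulr_suml divff.
have hq : distr R T q.
  split => //; rewrite (esum_enum e_bij) => [|t]; last by rewrite lee_fin.
  rewrite (@nneseries_finite _ (q \o e) n) => [|i|i /qe0 //]; last exact: q_ge0.
  exact: (congr1 EFin sum_qe).
have [s row_s] := row_reply hq; exists s; move: row_s.
rewrite /row_payoff (esum_enum e_bij); last by move=> t; rewrite lee_fin mulr_ge0 ?ler0n.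
rewrite (@nneseries_finite _ (fun i => q (e i) * (pi s (e i))%:R) n); first last.
- by move=> i ni; rewrite qe0 ?mul0r.
- by move=> i; rewrite mulr_ge0 ?ler0n.
rewrite (eq_bigr (fun j : 'I_n => w j * (pi s (e j))%:R / W)).
  by rewrite -mulr_suml lee_fin ler_pdivlMr.
by move=> j _; rewrite qe ltn_ord mulrAC.
Qed.

Lemma empirical_cover N : exists l : seq S, (0 < size l)%N /\
  forall j, (j <= N)%N -> (v - N.+1%:R^-1) * (size l)%:R <= (count (fun s => pi s (e j)) l)%:R.
Proof.
have eps0 : 0 < N.+1%:R^-1 :> R by rewrite invr_gt0.
have [l l_gt0 cover] := @approachability _ _ N.+1 (fun s j => pi s (e j)) v
  v_ge0 v_le1 (@finite_reply N.+1) _ eps0.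
by exists l.
Qed.

Lemma additive_cover : exists lam : set S -> R,
  finitely_additive_probability lam /\ forall t, v <= lam [set s | pi s t].
Proof.
have [einv _ ee2] := e_bij; have [L HL] := choice empirical_cover.
have [lam [lamP lam_ge]] := ultralimit_freq R (fun N => proj1 (HL N)).
exists lam; split => // t; apply: lam_ge => eps eps0.
exists (maxn (einv t) (Num.truncn eps^-1)) => // N /=; rewrite geq_max => /andP[tN epsN].
have [size_gt0 cover] := HL N; have := cover _ tN.
rewrite ee2 /freq -ler_pdivlMr ?ltr0n // => le_freq.
rewrite (eq_count (a2 := pi^~ t)) => [|s]; last by rewrite /= asboolb.
apply: le_trans le_freq; rewrite lerD2l lerN2.
rewrite -[leRHS]invrK lef_pV2 ?posrE ?invr_gt0 ?ltr0n //; apply: ltW.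
by apply: lt_le_trans (truncnS_gt _) _; rewrite ler_nat ltnS.
Qed.

Lemma guaranteeing_strategy :
  exists2 p, distr R S p & forall t, (v%:E <= col_payoff pi p t)%E.
Proof.
have [finv ff1 ff2] := f_bij; have [einv _ ee2] := e_bij.
have [lam [lamP cover]] := additive_cover.
have e_surj t : exists i, e i = t by exists (einv t).
have f_surj s : exists k, f k = s by exists (finv s).
have [a [a_ge0 a_sum1 a_cover]] := regularize e_surj f_surj hF lamP cover.
exists (a \o finv) => [|t].
  split => [s|]; first exact: a_ge0.
  rewrite (esum_enum f_bij) => [|s]; last by rewrite lee_fin /= a_ge0.
  by rewrite (eq_eseriesr (g := fun k => (a k)%:E)) // => k _ /=; rewrite ff1.
rewrite /col_payoff (esum_enum f_bij) => [|s]; last first.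
  by rewrite lee_fin mulr_ge0 ?ler0n //= a_ge0.
by rewrite (eq_eseriesr (g := fun k => (a k * (pi (f k) t)%:R)%:E)) // => k _ /=; rewrite ff1.
Qed.

End Guarantee.

Local Open Scope ereal_scope.

Lemma ereal_sup_inf_le_inf_sup (R : realType) (A B : Type) (P : set A) (Q : set B)
    (F : A -> B -> \bar R) :
  ereal_sup [set ereal_inf [set F a b | b in Q] | a in P] <=
  ereal_inf [set ereal_sup [set F a b | a in P] | b in Q].
Proof.
apply: ge_ereal_sup => _ [a Pa <-]; apply/ereal_infP => _ [b Qb <-].
apply: le_trans (_ : _ <= F a b) _; first by apply: ereal_inf_lbound; exists b.
by apply: ereal_sup_ubound; exists a.
Qed.

Section Value.
Variables (R : realType) (S T : choiceType) (pi : S -> T -> bool).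
Hypotheses (hS : countably_infinite S) (hT : countably_infinite T).
Hypothesis hF : ascending_union_closed (B1down pi).

Lemma pure_strategy_attains q : distr R T q -> exists2 p0, distr R S p0 &
  pimix pi p0 q = ereal_sup [set pimix pi p q | p in distr R S].
Proof.
move=> hq; have [f f_bij] := hS; have [e e_bij] := hT.
have [s0 best] := exists_pure_best_response f_bij e_bij hF hq.
exists (dirac R s0); first exact: dirac_distr.
apply/eqP; rewrite eq_le; apply/andP; split.
  by apply: ereal_sup_ubound; exists (dirac R s0) => //; exact: dirac_distr.
by apply: ge_ereal_sup => _ [p hp <-]; rewrite (pimix_dirac_row _ e_bij) //; exact: best.
Qed.

Lemma value_guaranteed : exists2 p0, distr R S p0 & forall q, distr R T q ->
  ereal_inf [set ereal_sup [set pimix pi p q' | p in distr R S] | q' in distr R T]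
  <= pimix pi p0 q.
Proof.
have [f f_bij] := hS; have [e e_bij] := hT.
set V := ereal_inf _.
have V_ge0 : 0 <= V.
  apply/ereal_infP => _ [q hq <-].
  apply: le_trans (pimix_ge0 pi (dirac_distr R (f 0%N)) hq) _.
  by apply: ereal_sup_ubound; exists (dirac R (f 0%N)) => //; exact: dirac_distr.
have V_le1 : V <= 1.
  apply: le_trans (_ : _ <= ereal_sup [set pimix pi p (dirac R (e 0%N)) | p in distr R S]) _.
    by apply: ereal_inf_lbound; exists (dirac R (e 0%N)) => //; exact: dirac_distr.
  apply: ge_ereal_sup => _ [p hp <-]; exact: (pimix_le1 pi f_bij e_bij hp (dirac_distr _ _)).
have V_fin : V \is a fin_num by rewrite ge0_fin_numE // (le_lt_trans V_le1) ?ltey.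
have row_reply q : distr R T q -> exists s, (fine V)%:E <= row_payoff pi q s.
  move=> hq; have [s0 best] := exists_pure_best_response f_bij e_bij hF hq.
  exists s0; rewrite fineK //.
  apply: le_trans (_ : V <= ereal_sup [set pimix pi p q | p in distr R S]) _.
    by apply: ereal_inf_lbound; exists q.
  by apply: ge_ereal_sup => _ [p hp <-]; exact: best.
have v_le1 : (fine V <= 1)%R by rewrite -lee_fin fineK.
have [p0 hp0 cover] := guaranteeing_strategy f_bij e_bij hF (fine_ge0 V_ge0) v_le1 row_reply.
exists p0 => // q hq; rewrite (pimix_col pi f_bij) // -(fineK V_fin).
exact: (esum_distr_ge e_bij hq (fine_ge0 V_ge0) cover).
Qed.

End Value.

Unset Implicit Arguments.

Theorem theorem2p2 (R : realType) (S T : choiceType) (pi : S -> T -> bool)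
  (hS : countably_infinite S) (hT : countably_infinite T)
  (hF : ascending_union_closed (B1down pi)) :
  (forall q, distr R T q ->
     exists2 p0, distr R S p0 &
       pimix pi p0 q = ereal_sup [set pimix pi p q | p in distr R S]) /\
  (exists2 p0, distr R S p0 &
     ereal_inf [set pimix pi p0 q | q in distr R T] =
     ereal_sup [set ereal_inf [set pimix pi p q | q in distr R T] | p in distr R S]) /\
  ereal_sup [set ereal_inf [set pimix pi p q | q in distr R T] | p in distr R S] =
  ereal_inf [set ereal_sup [set pimix pi p q | p in distr R S] | q in distr R T].
Proof.
split; first exact: pure_strategy_attains.
have [p0 hp0 guaranteed] := value_guaranteed R hS hT hF.
set maxmin := ereal_sup _; set minmax := ereal_inf _.
set value0 := ereal_inf [set pimix pi p0 q | q in distr R T].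
have le_value0 : minmax <= value0 by apply/ereal_infP => _ [q hq <-]; exact: guaranteed.
have value0_le : value0 <= maxmin by apply: ereal_sup_ubound; exists p0.
have weak : maxmin <= minmax := ereal_sup_inf_le_inf_sup _ _ _.
split; first by exists p0 => //; apply/eqP; rewrite eq_le value0_le (le_trans weak).
by apply/eqP; rewrite eq_le weak (le_trans le_value0).
Qed.
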